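(* Let $R$ be a ring, $\mathcal{L}$ a class of left $R$-modules, $M$ a bounded below complex and $N$ an exact complex which is $\mathrm{Hom}_R(\mathcal{L},-)$-exact. If for every $n\in\mathbb{Z}$ every morphism $M_n\to Z_n(N)$ factors through a module in $\mathcal{L}$, then every morphism of complexes $M\to N$ is null-homotopic via a homotopy $s$ whose components $s_n:M_n\to N_{n+1}$ each factor through a module of $\mathcal{L}$.
   Context: Complexes are homologically indexed, $Z_n(N)=\mathrm{Ker}\,d_n^N$. A complex $M$ is bounded below if there is $b$ with $M_n=0$ for all $n\le b$. A complex $X$ is $\mathrm{Hom}_R(\mathcal{L},-)$-exact if the complex of abelian groups $\mathrm{Hom}_R(L,X)$ is exact for every $L\in\mathcal{L}$. *)

From HB Require Import structures.
From mathcomp Require Import all_boot all_order all_algebra.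
Set Implicit Arguments. Unset Strict Implicit. Unset Printing Implicit Defensive.
Import GRing.Theory Num.Theory.
Local Open Scope ring_scope.

(* Following the "complex shape" convention, the differential is given as a
   family  dif i j : C_i -> C_j  which is zero unless j = i - 1; the paper's
   d_n is  dif n (n - 1). *)
Record complex (R : pzRingType) := Complex {
  obj :> int -> lmodType R;
  dif : forall i j : int, {linear obj i -> obj j};
  dif_shape : forall (i j : int), j <> i - 1 -> forall x, dif i j x = 0;
  dif_comp : forall (i j k : int) x, dif j k (dif i j x) = 0
}.

Definition is_chain_map (R : pzRingType) (M N : complex R)
  (f : forall n : int, {linear M n -> N n}) : Prop :=
  forall (i j : int) (x : M i), f j (dif M i j x) = dif N i j (f i x).

Definition bounded_below (R : pzRingType) (M : complex R) : Prop :=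
  exists b : int, forall n : int, n <= b -> forall x : M n, x = 0.

(* Exact: Ker d_n = Im d_{n+1} for all n (Im in Ker is automatic). *)
Definition exact_complex (R : pzRingType) (N : complex R) : Prop :=
  forall (n : int) (x : N n), dif N n (n - 1) x = 0 ->
    exists y : N (n + 1), dif N (n + 1) n y = x.

(* Hom_R(L, N) is exact for every L in the class: every map L -> N_n
   landing in Z_n(N) lifts through d_{n+1}. *)
Definition Hom_exact (R : pzRingType) (cls : lmodType R -> Prop)
  (N : complex R) : Prop :=
  forall (L : lmodType R), cls L ->
  forall (n : int) (phi : {linear L -> N n}),
    (forall y, dif N n (n - 1) (phi y) = 0) ->
    exists psi : {linear L -> N (n + 1)},
      forall y, dif N (n + 1) n (psi y) = phi y.

Definition factors_through (R : pzRingType) (cls : lmodType R -> Prop)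
  (U V : lmodType R) (f : U -> V) : Prop :=
  exists L : lmodType R, cls L /\
    exists (g : {linear U -> L}) (h : {linear L -> V}),
      forall x, f x = h (g x).

(* A morphism into the submodule Z_n(N) is rendered as a linear map into N_n
   with image in Ker d_n; the factorization L -> Z_n(N) likewise. *)
Definition cycles_factor (R : pzRingType) (cls : lmodType R -> Prop)
  (M N : complex R) : Prop :=
  forall (n : int) (g : {linear M n -> N n}),
    (forall x, dif N n (n - 1) (g x) = 0) ->
    exists L : lmodType R, cls L /\
      exists (a : {linear M n -> L}) (b : {linear L -> N n}),
        (forall y, dif N n (n - 1) (b y) = 0) /\
        (forall x, g x = b (a x)).

(** By induction upwards from the degree b below which M vanishes, with s = 0
   in degree b.  Given s_{n-1} with d s_{n-1} = f on the boundaries of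
   M_{n-1}, the map f_n - s_{n-1} d lands in Z_n(N), because
   d (f_n - s_{n-1} d) = f d - d s_{n-1} d = 0.  It therefore factors as
   M_n -> L -> Z_n(N) with L in the class, and Hom_R(L, N) exactness lifts
   L -> Z_n(N) through d_{n+1}; s_n is the resulting composite
   M_n -> L -> N_{n+1}, and f_n = d s_n + s_{n-1} d. *)

From HB Require Import structures.
From mathcomp Require Import all_boot all_order all_algebra.
From Stdlib Require Import ClassicalEpsilon.
Set Implicit Arguments. Unset Strict Implicit.
Import Order.TTheory GRing.Theory Num.Theory.
Local Open Scope ring_scope.

(* [iter k.+1 succz b] is convertible to [iter k succz b + 1], so a recursion
   on k can produce maps whose source and target degrees are shifted by one
   without any transport. *)
Local Notation succz := (fun n : int => n + 1).

Lemma iter_succz (b : int) (k : nat) : iter k succz b = b + k%:Z.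
Proof.
by elim: k => [|k IHk] /=; rewrite ?addr0 // IHk -addrA -[in RHS]addn1 PoszD.
Qed.

Lemma iter_succzP (b n : int) : b <= n -> exists k : nat, n = iter k succz b.
Proof.
move=> le_bn; exists `|n - b|%N.
by rewrite iter_succz gez0_abs ?subr_ge0 // addrCA subrr addr0.
Qed.

Lemma ltz_succP (b n : int) : b < n -> exists2 m, b <= m & n = m + 1.
Proof. by move=> lt_bn; exists (n - 1); rewrite ?subrK // lerBrDr lezD1. Qed.

Lemma reindex_iter_succz (P : int -> Type) (b : int)
    (g : forall k : nat, P (iter k succz b)) (d : forall n, P n) :
  exists h : forall n, P n, forall k, h (iter k succz b) = g k.
Proof.
exists (fun n => match iter `|n - b| succz b =P n with
                 | ReflectT e => ecast n (P n) e (g `|n - b|%N)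
                 | ReflectF _ => d n end) => k.
have k_eq : `|iter k succz b - b|%N = k by rewrite iter_succz addrC addKr.
case: eqP => [e | []]; last by rewrite k_eq.
by move: e; rewrite k_eq => e; rewrite (eq_irrelevance e erefl).
Qed.

Lemma extend_to_pairs (P : int -> int -> Type)
    (h : forall i, P i (i + 1)) (d : forall i j, P i j) :
  exists s : forall i j, P i j, forall i, s i (i + 1) = h i.
Proof.
exists (fun i j => match i + 1 =P j with
                   | ReflectT e => ecast j (P i j) e (h i)
                   | ReflectF _ => d i j end) => i.
by case: eqP => // e; rewrite (eq_irrelevance e erefl).
Qed.

Lemma factors_through_zero (R : pzRingType) (cls : lmodType R -> Prop)
    (U V L : lmodType R) (g : U -> V) :
  cls L -> g =1 (fun=> 0) -> factors_through cls g.
Proof.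
move=> clsL g0; exists L; split => //; exists \0%R, \0%R => x.
by rewrite g0.
Qed.

Section Homotopy.

Variables (R : pzRingType) (cls : lmodType R -> Prop) (M N : complex R).
Variable f : forall n : int, {linear M n -> N n}.
Hypotheses (f_chain : is_chain_map f) (N_Hom_exact : Hom_exact cls N)
  (cyclesf : cycles_factor cls M N).

Definition homotopy_on_boundaries (n : int) (s : {linear M n -> N (n + 1)}) :=
  forall y : M (n + 1),
    dif N (n + 1) n (s (dif M (n + 1) n y)) = f n (dif M (n + 1) n y).

Definition homotopy_step (n : int) (s : {linear M n -> N (n + 1)})
    (s' : {linear M (n + 1) -> N (n + 1 + 1)}) :=
  forall x : M (n + 1),
    f (n + 1) x = dif N (n + 1 + 1) (n + 1) (s' x) + s (dif M (n + 1) n x).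

Lemma homotopy_step_boundaries n (s : {linear M n -> N (n + 1)}) s' :
  homotopy_step s s' -> homotopy_on_boundaries s'.
Proof. by move=> hs y; rewrite hs dif_comp raddf0 addr0. Qed.

Lemma homotopy_step_exists n (s : {linear M n -> N (n + 1)}) :
  homotopy_on_boundaries s ->
  exists s' : {linear M (n + 1) -> N (n + 1 + 1)},
    factors_through cls s' /\ homotopy_step s s'.
Proof.
move=> hs.
pose g : {linear M (n + 1) -> N (n + 1)} :=
  (f (n + 1) \- (s \o dif M (n + 1) n))%R.
have g_cycle x : dif N (n + 1) (n + 1 - 1) (g x) = 0.
  by rewrite addrK raddfB /= -f_chain hs subrr.
have [L [clsL [a [c [c_cycle gE]]]]] := cyclesf g_cycle.
have [c' c'E] := N_Hom_exact clsL c_cycle.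
exists (c' \o a)%R; split; first by exists L; split => //; exists a, c'.
by move=> x /=; rewrite c'E -gE /= subrK.
Qed.

Definition next_homotopy n (s : {linear M n -> N (n + 1)})
    (hs : homotopy_on_boundaries s) :=
  constructive_indefinite_description _ (homotopy_step_exists hs).

Variables (b : int) (M_b0 : forall x : M b, x = 0).

Lemma homotopy_on_boundaries0 :
  homotopy_on_boundaries (\0%R : {linear M b -> N (b + 1)}).
Proof. by move=> y; rewrite (M_b0 (dif M (b + 1) b y)) !raddf0. Qed.

Fixpoint homotopy_seq (k : nat) :
    {s : {linear M (iter k succz b) -> N (iter k succz b + 1)} |
      homotopy_on_boundaries s} :=
  match k with
  | 0%N => exist _ _ homotopy_on_boundaries0
  | k'.+1 =>
    let: exist s' (conj _ hs') := next_homotopy (svalP (homotopy_seq k')) in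
    exist _ s' (homotopy_step_boundaries hs')
  end.

Lemma homotopy_seqP (k : nat) :
  factors_through cls (sval (homotopy_seq k.+1)) /\
  homotopy_step (sval (homotopy_seq k)) (sval (homotopy_seq k.+1)).
Proof. by rewrite /=; case: next_homotopy => s' []. Qed.

Lemma homotopy_above :
  exists h : forall n : int, {linear M n -> N (n + 1)},
    forall n, b <= n ->
      factors_through cls (h (n + 1)) /\ homotopy_step (h n) (h (n + 1)).
Proof.
have [h hE] := reindex_iter_succz (fun k => sval (homotopy_seq k))
  (fun n => \0%R : {linear M n -> N (n + 1)}).
exists h => _ /iter_succzP[k ->].
by rewrite (hE k) (hE k.+1); apply: homotopy_seqP.
Qed.

End Homotopy.

Theorem lemma2p5 (R : pzRingType) (cls : lmodType R -> Prop)
  (M N : complex R) :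
  bounded_below M -> exact_complex N -> Hom_exact cls N ->
  cycles_factor cls M N ->
  forall f : forall n : int, {linear M n -> N n},
    is_chain_map f ->
    exists s : forall i j : int, {linear M i -> N j},
      (forall n : int, factors_through cls (s n (n + 1))) /\
      (forall (n : int) (x : M n),
         f n x = dif N (n + 1) n (s n (n + 1) x) + s (n - 1) n (dif M n (n - 1) x)).
Proof.
move=> [b M0] _ N_Hom_exact cyclesf f f_chain.
have [L [clsL _]] := cyclesf b \0%R (fun=> raddf0 _).
have [h hh] := homotopy_above f_chain N_Hom_exact cyclesf (M0 b (lexx b)).
have [s sE] := extend_to_pairs h (fun i j => \0%R : {linear M i -> N j}).
exists s; split => n; case: (lerP n b) => [le_nb | lt_bn].
- rewrite sE; apply: factors_through_zero clsL _ => x.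
  by rewrite (M0 n le_nb x) raddf0.
- have [m le_bm ->] := ltz_succP lt_bn.
  by rewrite sE; apply: (hh m le_bm).1.
- by move=> x; rewrite (M0 n le_nb x) !raddf0 addr0.
- have [m le_bm ->] := ltz_succP lt_bn.
  by rewrite [m + 1 - 1]addrK !sE; apply: (hh m le_bm).2.
Qed.
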